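(* For all $m\in\mathbb{N}$, $\delta\in(0,1)$ and $\boldsymbol{\mu}\in\Delta_\mathbb{N}$, with $\boldsymbol{X}\sim\boldsymbol{\mu}^m$, with probability at least $1-\delta$, $$\|\widehat{\boldsymbol{\mu}}_m-\boldsymbol{\mu}\|_{TV}\ge\frac12\hat{\mathfrak{R}}_m(\boldsymbol{X})-3\sqrt{\frac{\log(2/\delta)}{m}}.$$
   Context: $\Delta_\mathbb{N}$ is the set of probability distributions on $\mathbb{N}=\{1,2,\dots\}$; $\widehat{\boldsymbol{\mu}}_m(i)=\frac1m\sum_{t=1}^m\mathbb{I}\{X_t=i\}$; $\|\boldsymbol{\mu}-\boldsymbol{\nu}\|_{TV}=\frac12\sum_i|\boldsymbol{\mu}(i)-\boldsymbol{\nu}(i)|$. $\hat{\mathfrak{R}}_m(\boldsymbol{X})=\mathbb{E}_{\boldsymbol{\sigma}}\big[\sup_{f:\mathbb{N}\to\{0,1\}}\frac1m\sum_{t=1}^m\sigma_tf(X_t)\big]$ with $\boldsymbol{\sigma}$ uniform on $\{-1,1\}^m$. $\log$ is natural. *)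

From HB Require Import structures.
From mathcomp Require Import all_boot all_order all_algebra.
From mathcomp Require Import all_classical all_reals all_analysis.
Set Implicit Arguments. Unset Strict Implicit. Unset Printing Implicit Defensive.
Import Order.TTheory GRing.Theory Num.Theory.
Local Open Scope classical_set_scope.
Local Open Scope ring_scope.

Section Defs.
Variable R : realType.

(* A probability distribution on N = {1,2,...}, represented as a function on
   Rocq's nat with no mass at 0. *)
Definition is_distrN (mu : nat -> R) : Prop :=
  [/\ forall i, 0 <= mu i, mu 0%N = 0 &
      (\esum_(i in [set: nat]) (mu i)%:E = 1)%E].

Definition prob_prod (m : nat) (mu : nat -> R) (E : set {ffun 'I_m -> nat}) : \bar R :=
  \esum_(x in E) (\prod_(t < m) mu (x t))%:E.

Definition emp (m : nat) (x : {ffun 'I_m -> nat}) (i : nat) : R :=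
  (m%:R)^-1 * (#|[set t : 'I_m | x t == i]|)%:R.

(* Total variation distance (as an extended real, a possibly infinite sum
   that is in fact finite). *)
Definition tv_dist (p q : nat -> R) : \bar R :=
  ((2 : R)^-1)%:E * \esum_(i in [set: nat]) (`| p i - q i |)%:E.

Definition sgn (b : bool) : R := if b then 1 else -1.

Definition emp_rademacher (m : nat) (x : {ffun 'I_m -> nat}) : R :=
  ((2 : R) ^+ m)^-1 *
  \sum_(s : {ffun 'I_m -> bool})
     sup [set (m%:R)^-1 * \sum_(t < m) sgn (s t) * (f (x t) : nat)%:R
         | f in [set: nat -> bool]].

End Defs.
Arguments prob_prod {R m}.
Arguments emp {R m}.
Arguments tv_dist {R}.
Arguments emp_rademacher {R m}.
Arguments is_distrN {R}.

From HB Require Import structures.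
From mathcomp Require Import all_boot all_order all_algebra.
From mathcomp Require Import all_classical all_reals all_analysis.
From mathcomp Require Import finmap ring lra.
Set Implicit Arguments. Unset Strict Implicit. Unset Printing Implicit Defensive.
Import Order.TTheory GRing.Theory Num.Theory.
Local Open Scope ring_scope.

(* The law mu lives on all of N, so we first truncate it to an initial
   segment {0,..,N-1} of mass M >= 1 - delta/(12 m) and work with the
   renormalised law p = mu/M on 'I_N.  For a sample x ~ p^m consider
     gap x = Rad(x)/2 - TV(emp x, p).
   1. A one-sided McDiarmid inequality for functions of m independent
      coordinates over a finite alphabet, via the moment generating function
      and the quadratic bound expR u <= 1 + u + 9/10 u^2 for |u| <= 1/5.
   2. gap has bounded differences 3/(2m), and symmetrisation with a ghost
      sample gives E[Rad] <= 2 E[TV] + 1/sqrt m, hence E[gap] <= 1/(2 sqrt m).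
   3. Consequently gap exceeds 3 sqrt(ln(2/delta)/m) - (1-M)/2 with
      p^m-probability at most 10/11 delta.
   4. Back to mu: TV(emp, mu) >= TV(emp, p) - (1-M)/2, and the good event has
      mu^m-mass at least M^m (1 - 10/11 delta) >= 1 - delta. *)

Section RealBounds.
Variable R : realType.

(* From 1 - u <= expR (- u). *)
Lemma expR_le_inv (u : R) : u < 1 -> expR u <= (1 - u)^-1.
Proof.
move=> hu; have h1 := expR_ge1Dx (- u); rewrite expRN in h1.
have hp : 0 < 1 - u by lra.
by rewrite -(invrK (expR u)) lef_pV2 ?posrE ?invr_gt0 ?expR_gt0.
Qed.

Lemma expR_le_quad (u : R) : -(1/5) <= u <= 1/5 -> expR u <= 1 + u + 9/10 * u ^+ 2.
Proof.
move=> /andP[hu1 hu2].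
have h := expR_le_inv (u := u / 2) ltac:(lra).
have e : expR u = expR (u / 2) * expR (u / 2) by rewrite -expRD; congr expR; field.
have hp : 0 < 1 - u / 2 by lra.
apply: (le_trans (y := (1 - u / 2)^-1 * (1 - u / 2)^-1)).
  by rewrite e; apply: ler_pM => //; apply: expR_ge0.
have hq : 0 < (1 - u / 2) * (1 - u / 2) by apply: mulr_gt0.
rewrite -invrM ?unitfE ?gt_eqF // -(ler_pM2r hq) mulVf ?gt_eqF //.
nra.
Qed.

(* Since expR (1/2) <= (1 - 1/4)^-2 = 16/9 < 2. *)
Lemma ln2_ge : 1/2 <= ln (2 : R).
Proof.
have h1 := expR_le_inv (u := 1/4 : R) ltac:(lra).
have h2 : expR (1/2 : R) = expR (1/4) * expR (1/4) by rewrite -expRD; congr expR; field.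
have h3 : expR (1/2 : R) <= 2.
  have h0 := expR_ge0 (1/4 : R).
  have h4 : (1 - 1/4 : R)^-1 = 4/3 by field.
  by rewrite h2; rewrite h4 in h1; nra.
by rewrite -ler_expR lnK // posrE.
Qed.

Lemma bernoulli_ineq (M : R) k : 0 <= M -> 1 - k%:R * (1 - M) <= M ^+ k.
Proof.
move=> M0; elim: k => [|k IH]; first by rewrite expr0 mul0r subr0.
rewrite exprS -addn1 natrD mulrDl mul1r.
have h : M * (1 - k%:R * (1 - M)) <= M * M ^+ k by apply: ler_wpM2l.
have hk : 0 <= k%:R * (1 - M) ^+ 2 :> R by rewrite mulr_ge0 ?ler0n ?sqr_ge0.
have e : M * (1 - k%:R * (1 - M)) = 1 - (k%:R + 1) * (1 - M) + k%:R * (1 - M) ^+ 2.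
  by ring.
lra.
Qed.

Lemma sqrt_le_self (a : R) : 1 <= a -> Num.sqrt a <= a.
Proof.
move=> a1; have v0 : 0 <= Num.sqrt a := sqrtr_ge0 a.
have vv : Num.sqrt a ^+ 2 = a by rewrite sqr_sqrtr //; lra.
by nra.
Qed.

(* The two losses of the final argument, delta/12 from the truncation and
   10/11 delta from the tail, fit in the budget delta. *)
Lemma loss_budget (delta A B : R) : 0 < delta < 1 ->
  1 - delta / 12 <= A -> B <= 10/11 * delta -> 1 - delta <= A * (1 - B).
Proof.
move=> /andP[d0 d1] hA hB.
have h3 : (1 - delta / 12) * (1 - 10/11 * delta) <= A * (1 - B) by apply: ler_pM; lra.
by have := sqr_ge0 delta; nra.
Qed.

End RealBounds.

(* Product measures p^m on the sample space {ffun 'I_m -> T} of a finite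
   alphabet T, and a one-sided McDiarmid inequality for them. *)
Section ProductMeasure.
Variable R : realType.
Variable T : finType.
Variable p : T -> R.
Hypothesis p_ge0 : forall i, 0 <= p i.
Hypothesis p_sum1 : \sum_i p i = 1.

Definition wprod m (x : {ffun 'I_m -> T}) : R := \prod_(t < m) p (x t).
Definition expect m (G : {ffun 'I_m -> T} -> R) : R := \sum_x wprod x * G x.

Definition upd m (x : {ffun 'I_m -> T}) (i : 'I_m) (y : T) : {ffun 'I_m -> T} :=
  [ffun j => if j == i then y else x j].

Definition bounded_diff m (c : R) (G : {ffun 'I_m -> T} -> R) :=
  forall x i y, G x - G (upd x i y) <= c.

Definition fcons m (y : T) (r : {ffun 'I_m -> T}) : {ffun 'I_m.+1 -> T} :=
  [ffun i => if unlift ord0 i is Some j then r j else y].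
Definition ftail m (x : {ffun 'I_m.+1 -> T}) : {ffun 'I_m -> T} :=
  [ffun j => x (lift ord0 j)].

Lemma wprod_ge0 m x : 0 <= @wprod m x.
Proof. by apply: prodr_ge0 => i _; apply: p_ge0. Qed.

Lemma sum_wprod m : \sum_(x : {ffun 'I_m -> T}) wprod x = 1.
Proof.
rewrite /wprod -(bigA_distr_bigA (fun (t : 'I_m) (i : T) => p i)) /=.
by rewrite big1 // => i _; rewrite p_sum1.
Qed.

Lemma marginal m (t : 'I_m) (g : T -> R) :
  \sum_(x : {ffun 'I_m -> T}) wprod x * g (x t) = \sum_i p i * g i.
Proof.
pose F := fun (u : 'I_m) (i : T) => p i * (if u == t then g i else 1).
have -> : \sum_(x : {ffun 'I_m -> T}) wprod x * g (x t) =
          \sum_(x : {ffun 'I_m -> T}) \prod_u F u (x u).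
  apply: eq_bigr => x _; rewrite /wprod /F (bigD1 t) //= (bigD1 t (P := predT)) //=.
  rewrite eqxx -mulrA [_ * g (x t)]mulrC mulrA; congr (_ * _).
  by apply: eq_bigr => u /negPf ->; rewrite mulr1.
rewrite -(bigA_distr_bigA F) (bigD1 t) //= [X in _ * X]big1 ?mulr1.
  by apply: eq_bigr => i _; rewrite /F eqxx.
by move=> u /negPf hu; rewrite /F; under eq_bigr do rewrite hu mulr1; rewrite p_sum1.
Qed.

Lemma fcons0 m y (r : {ffun 'I_m -> T}) : fcons y r ord0 = y.
Proof. by rewrite /fcons ffunE unlift_none. Qed.

Lemma fconsS m y (r : {ffun 'I_m -> T}) j : fcons y r (lift ord0 j) = r j.
Proof. by rewrite /fcons ffunE liftK. Qed.

Lemma fconsK m (x : {ffun 'I_m.+1 -> T}) : fcons (x ord0) (ftail x) = x.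
Proof.
apply/ffunP => i; rewrite /fcons ffunE.
by case: (unliftP ord0 i) => [j -> | ->] //; rewrite /ftail ffunE.
Qed.

Lemma sum_fcons m (F : {ffun 'I_m.+1 -> T} -> R) :
  \sum_x F x = \sum_y \sum_(r : {ffun 'I_m -> T}) F (fcons y r).
Proof.
rewrite pair_big /= (reindex (fun yr : T * {ffun 'I_m -> T} => fcons yr.1 yr.2)) //=.
exists (fun x : {ffun 'I_m.+1 -> T} => (x ord0, ftail x)) => [[y r] _ | x _] /=;
  last exact: fconsK.
congr pair; first exact: fcons0.
by apply/ffunP => j; rewrite /ftail ffunE fconsS.
Qed.

Lemma wprod_fcons m y (r : {ffun 'I_m -> T}) : wprod (fcons y r) = p y * wprod r.
Proof.
rewrite /wprod big_ord_recl fcons0; congr (_ * _).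
by apply: eq_bigr => i _; rewrite fconsS.
Qed.

Lemma fcons_upd m y (r : {ffun 'I_m -> T}) j z :
  fcons y (upd r j z) = upd (fcons y r) (lift ord0 j) z.
Proof.
apply/ffunP => i; rewrite /upd /fcons !ffunE.
case: (unliftP ord0 i) => [k -> | ->] //=.
by rewrite (inj_eq (@lift_inj _ ord0)) ffunE.
Qed.

Lemma fcons_upd0 m y y' (r : {ffun 'I_m -> T}) :
  fcons y' r = upd (fcons y r) ord0 y'.
Proof.
by apply/ffunP => i; rewrite /upd /fcons !ffunE; case: (unliftP ord0 i) => [k -> | ->].
Qed.

Lemma expect_fcons m (G : {ffun 'I_m.+1 -> T} -> R) :
  expect G = \sum_y p y * expect (fun r => G (fcons y r)).
Proof.
rewrite /expect sum_fcons; apply: eq_bigr => y _; rewrite big_distrr /=.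
by apply: eq_bigr => r _; rewrite wprod_fcons mulrA.
Qed.

(* Hoeffding's lemma (with constant 9/10 instead of 1/8, valid when the
   exponent is small): a centred variable with values in [-c, c]. *)
Lemma hoeffding_lemma (Y : T -> R) s c : 0 <= s -> 0 <= c -> s * c <= 1/5 ->
  (forall y, -c <= Y y <= c) -> \sum_y p y * Y y = 0 ->
  \sum_y p y * expR (s * Y y) <= expR (9/10 * s ^+ 2 * c ^+ 2).
Proof.
move=> s0 c0 sc hY hm.
apply: (le_trans (y := \sum_y p y * (1 + s * Y y + 9/10 * (s ^+ 2 * c ^+ 2)))).
  apply: ler_sum => y _; apply: ler_wpM2l => //.
  have /andP[h1 h2] := hY y.
  have h3 : s * Y y <= s * c by apply: ler_wpM2l.
  have h4 : - (s * c) <= s * Y y by rewrite -mulrN; apply: ler_wpM2l.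
  apply: (le_trans (expR_le_quad _)); first by apply/andP; split; lra.
  have : (s * Y y) ^+ 2 <= s ^+ 2 * c ^+ 2 by nra.
  lra.
rewrite (eq_bigr (fun y => p y + s * (p y * Y y) + 9/10 * (s ^+ 2 * c ^+ 2) * p y));
  last by move=> y _; ring.
rewrite !big_split /= -!mulr_sumr hm p_sum1 mulr0 addr0 mulr1 mulrA.
exact: expR_ge1Dx.
Qed.

Lemma centred_range (H : T -> R) c : (forall y y', H y - H y' <= c) ->
  forall y, - c <= H y - \sum_y0 p y0 * H y0 <= c.
Proof.
move=> Hd y.
have -> : H y - \sum_y0 p y0 * H y0 = \sum_y0 p y0 * (H y - H y0).
  rewrite [RHS](eq_bigr (fun y0 => p y0 * H y - p y0 * H y0)); last by move=> ? _; ring.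
  by rewrite sumrB -mulr_suml p_sum1 mul1r.
apply/andP; split.
  rewrite -[X in - X]mul1r -p_sum1 mulr_suml -sumrN; apply: ler_sum => y0 _.
  by rewrite -mulrN; apply: ler_wpM2l => //; have := Hd y0 y; lra.
rewrite -[X in _ <= X]mul1r -p_sum1 mulr_suml; apply: ler_sum => y0 _.
by apply: ler_wpM2l => //; apply: Hd.
Qed.

Lemma expect_size0 (G : {ffun 'I_0 -> T} -> R) x : expect G = G x.
Proof.
have xE y : y = x by apply/ffunP => -[].
rewrite /expect (eq_bigr (fun y => wprod y * G x)); last by move=> y _; rewrite (xE y).
by rewrite -mulr_suml sum_wprod mul1r.
Qed.

Lemma cond_expect_diff m c (G : {ffun 'I_m.+1 -> T} -> R) : bounded_diff c G ->
  forall y y', expect (fun r => G (fcons y r)) - expect (fun r => G (fcons y' r)) <= c.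
Proof.
move=> hG y y'; rewrite /expect -sumrB.
apply: (le_trans (y := \sum_(r : {ffun 'I_m -> T}) wprod r * c));
  last by rewrite -mulr_suml sum_wprod mul1r.
apply: ler_sum => r _; rewrite -mulrBr; apply: ler_wpM2l; first exact: wprod_ge0.
by rewrite (fcons_upd0 y y'); apply: hG.
Qed.

(* McDiarmid's bound on the moment generating function, by induction on the
   number of coordinates: condition on the first one, use the induction
   hypothesis on the rest and Hoeffding's lemma on the first. *)
Lemma mcdiarmid_mgf m s c (G : {ffun 'I_m -> T} -> R) :
  0 <= s -> 0 <= c -> s * c <= 1/5 -> bounded_diff c G ->
  expect (fun x => expR (s * (G x - expect G))) <= expR (9/10 * s ^+ 2 * c ^+ 2 * m%:R).
Proof.
move=> s0 c0 sc; elim: m G => [|m IH] G hG.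
  rewrite mulr0 expR0 -[leRHS](sum_wprod 0) le_eqVlt; apply/orP; left.
  by apply/eqP/eq_bigr => x _; rewrite (expect_size0 G x) subrr mulr0 expR0 mulr1.
set a := 9/10 * s ^+ 2 * c ^+ 2.
pose H y := expect (fun r => G (fcons y r)).
have EG : expect G = \sum_y p y * H y := expect_fcons G.
rewrite /expect sum_fcons.
apply: (le_trans (y := \sum_y p y * expR (s * (H y - expect G)) * expR (a * m%:R))).
  apply: ler_sum => y _.
  have -> : \sum_r wprod (fcons y r) * expR (s * (G (fcons y r) - expect G)) =
    p y * expR (s * (H y - expect G)) *
      expect (fun r => expR (s * (G (fcons y r) - H y))).
    rewrite mulr_sumr; apply: eq_bigr => r _; rewrite wprod_fcons.
    have -> : s * (G (fcons y r) - expect G) =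
              s * (H y - expect G) + s * (G (fcons y r) - H y) by ring.
    rewrite expRD; ring.
  apply: ler_wpM2l; first by apply: mulr_ge0 => //; apply: expR_ge0.
  by apply: IH => r i z; rewrite fcons_upd; apply: hG.
rewrite -mulr_suml -[(m.+1)%:R]natr1 mulrDr mulr1 expRD mulrC.
apply: ler_wpM2l; first exact: expR_ge0.
apply: hoeffding_lemma; rewrite ?EG //; first exact: centred_range (cond_expect_diff hG).
rewrite [LHS](eq_bigr (fun y => p y * H y - p y * \sum_y0 p y0 * H y0));
  last by move=> ? _; ring.
by rewrite sumrB -mulr_suml p_sum1 mul1r subrr.
Qed.

Lemma mcdiarmid_tail m s c eps b (G : {ffun 'I_m -> T} -> R) :
  0 <= s -> 0 <= c -> s * c <= 1/5 -> bounded_diff c G -> expect G + eps <= b ->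
  \sum_(x | ~~ (G x <= b)) wprod x <=
    expR (- (s * eps)) * expR (9/10 * s ^+ 2 * c ^+ 2 * m%:R).
Proof.
move=> s0 c0 sc hG hb.
apply: (le_trans _ (ler_wpM2l (expR_ge0 _) (mcdiarmid_mgf s0 c0 sc hG))).
set EG := expect G in hb *.
rewrite /expect mulr_sumr [leRHS](bigID (fun x => ~~ (G x <= b))) /=.
apply: ler_wpDr.
  apply: sumr_ge0 => x _; apply: mulr_ge0; first exact: expR_ge0.
  by apply: mulr_ge0; [exact: wprod_ge0 | exact: expR_ge0].
apply: ler_sum => x; rewrite -ltNge => hx.
rewrite mulrCA -[leLHS]mulr1; apply: ler_wpM2l; first exact: wprod_ge0.
rewrite -expRD -expR0 ler_expR.
have : s * eps <= s * (G x - EG) by apply: ler_wpM2l => //; lra.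
lra.
Qed.

End ProductMeasure.

Local Open Scope classical_set_scope.

Section Suprema.
Variables (R : realType) (I : pointedType).

Lemma sup_img_ub (phi : I -> R) B :
  (forall f, phi f <= B) -> sup [set phi f | f in [set: I]] <= B.
Proof.
move=> hB; apply: ge_sup; first by exists (phi point); exists point.
by move=> _ [f _ <-]; apply: hB.
Qed.

Lemma sup_img_ge (phi : I -> R) B f0 :
  (forall f, phi f <= B) -> phi f0 <= sup [set phi f | f in [set: I]].
Proof.
move=> hB; apply: ub_le_sup; last by exists f0.
by exists B => _ [f _ <-]; apply: hB.
Qed.

Lemma sup_img_le (phi psi : I -> R) B d :
  (forall f, psi f <= B) -> (forall f, phi f <= psi f + d) ->
  sup [set phi f | f in [set: I]] <= sup [set psi f | f in [set: I]] + d.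
Proof.
move=> hB hd; apply: sup_img_ub => f.
by apply: (le_trans (hd f)); rewrite lerD2r; apply: sup_img_ge hB.
Qed.

End Suprema.

Lemma in_mkset_bool (T : Type) (P : T -> bool) t : (t \in [set u | P u]) = P t.
Proof. by apply/idP/idP; rewrite in_setE. Qed.

Lemma nat_of_bool_01 (R : realType) (b : bool) :
  0 <= (b : nat)%:R :> R /\ (b : nat)%:R <= 1 :> R.
Proof. by case: b; rewrite /= ?mulr1n ?mulr0n; split; lra. Qed.

Section EmpiricalGap.
Variable R : realType.
Variables (n m : nat).
Hypothesis m_gt0 : (0 < m)%N.
Variable p : 'I_n -> R.
Hypothesis p_ge0 : forall i, 0 <= p i.
Hypothesis p_sum1 : \sum_i p i = 1.

Local Notation sample := {ffun 'I_m -> 'I_n}.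
Local Notation signs := {ffun 'I_m -> bool}.

Definition to_nat (x : sample) : {ffun 'I_m -> nat} := [ffun t => val (x t)].

Lemma to_nat_inj : injective to_nat.
Proof.
move=> x y h; apply/ffunP => t.
by have := congr1 (fun f : {ffun 'I_m -> nat} => f t) h; rewrite !ffunE => /val_inj.
Qed.

Definition corr (x : sample) (s : signs) (f : nat -> bool) : R :=
  (m%:R)^-1 * \sum_(t < m) sgn R (s t) * (f (to_nat x t) : nat)%:R.

Definition tv_fin (x : sample) : R := 2^-1 * \sum_i `|emp (to_nat x) (val i) - p i|.
Definition rad (x : sample) : R := emp_rademacher (to_nat x).
Definition gap (x : sample) : R := 2^-1 * rad x - tv_fin x.

Lemma mR_gt0 : 0 < m%:R :> R. Proof. by rewrite ltr0n. Qed.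

Lemma radE x : rad x = (2 ^+ m)^-1 * \sum_s sup [set corr x s f | f in [set: nat -> bool]].
Proof. by []. Qed.

Lemma card_signs : #|signs| = (2 ^ m)%N.
Proof. by rewrite card_ffun card_bool card_ord. Qed.

Lemma corr_le1 x s f : corr x s f <= 1.
Proof.
rewrite /corr ler_pdivrMl ?mR_gt0 // mulr1.
apply: (le_trans (y := \sum_(t < m) (1 : R))); last by rewrite sumr_const card_ord.
apply: ler_sum => t _; have [h0 h1] := nat_of_bool_01 R (f (to_nat x t)).
by case: (s t); rewrite /sgn; lra.
Qed.

Lemma rad_le1 x : rad x <= 1.
Proof.
rewrite radE ler_pdivrMl ?exprn_gt0 // mulr1.
apply: (le_trans (y := \sum_(s : signs) (1 : R))).
  by apply: ler_sum => s _; apply: sup_img_ub => f; apply: corr_le1.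
by rewrite sumr_const card_signs natrX.
Qed.

Lemma tv_fin_ge0 x : 0 <= tv_fin x.
Proof. by apply: mulr_ge0 => //; apply: sumr_ge0 => i _. Qed.

Lemma gap_le_half x : gap x <= 2^-1.
Proof. by have := rad_le1 x; have := tv_fin_ge0 x; rewrite /gap; lra. Qed.

Lemma emp_fin x (i : 'I_n) : emp (to_nat x) (val i) = (m%:R)^-1 * \sum_t (x t == i)%:R :> R.
Proof.
rewrite /emp; congr (_ * _).
rewrite -sum1_card natr_sum big_mkcond /=; apply: eq_bigr => t _.
by rewrite in_mkset_bool /to_nat ffunE val_eqE; case: (x t == i).
Qed.

Lemma sum_emp x : \sum_(i : 'I_n) emp (to_nat x) (val i) = 1 :> R.
Proof.
under eq_bigr do rewrite emp_fin.
rewrite -mulr_sumr exchange_big /= (eq_bigr (fun _ => 1)).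
  by rewrite sumr_const card_ord mulVf // gt_eqF // mR_gt0.
move=> t _; rewrite (bigD1 (x t)) //= eqxx big1 ?addr0 //.
by move=> i; rewrite eq_sym => /negPf ->.
Qed.

Lemma sum_upd (F : 'I_m -> 'I_n -> R) x i y :
  \sum_t F t (upd x i y t) - \sum_t F t (x t) = F i y - F i (x i).
Proof.
rewrite -sumrB (bigD1 i) //= big1 ?addr0; first by rewrite /upd ffunE eqxx.
by move=> t /negPf hti; rewrite /upd ffunE hti subrr.
Qed.

Lemma corr_upd x i y s f : corr x s f <= corr (upd x i y) s f + (m%:R)^-1.
Proof.
rewrite /corr -lerBlDl -mulrBr /to_nat.
under eq_bigr do rewrite ffunE.
under [X in _ - X]eq_bigr do rewrite ffunE.
rewrite -opprB (sum_upd (fun t z => sgn R (s t) * (f (val z) : nat)%:R) x i y).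
rewrite ler_pdivrMl ?mR_gt0 // mulfV ?gt_eqF ?mR_gt0 //.
by case: (s i); case: (f _); case: (f _); rewrite /sgn /= ?mulr1n ?mulr0n; lra.
Qed.

Lemma rad_upd x i y : rad x <= rad (upd x i y) + (m%:R)^-1.
Proof.
rewrite !radE -lerBlDl -mulrBr -sumrB ler_pdivrMl ?exprn_gt0 //.
apply: (le_trans (y := \sum_(s : signs) (m%:R)^-1)).
  apply: ler_sum => s _; rewrite lerBlDl.
  by apply: (sup_img_le (B := 1)) => f; [apply: corr_le1 | apply: corr_upd].
by rewrite sumr_const card_signs -[X in X <= _]mulr_natl natrX mulrC.
Qed.

Lemma emp_upd x i y (j : 'I_n) :
  emp (to_nat (upd x i y)) (val j) - emp (to_nat x) (val j) =
  (m%:R)^-1 * ((y == j)%:R - (x i == j)%:R) :> R.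
Proof.
rewrite !emp_fin -mulrBr; congr (_ * _).
exact: (sum_upd (fun _ z => (z == j)%:R)).
Qed.

Lemma tv_fin_upd x i y : tv_fin (upd x i y) <= tv_fin x + (m%:R)^-1.
Proof.
have hm : 0 <= (m%:R)^-1 :> R by rewrite invr_ge0 ler0n.
apply: (le_trans (y := 2^-1 * \sum_j (`|emp (to_nat x) (val j) - p j| +
          (m%:R)^-1 * ((y == j)%:R + (x i == j)%:R)))).
  apply: ler_wpM2l => //; apply: ler_sum => j _.
  have -> : emp (to_nat (upd x i y)) (val j) - p j =
     (emp (to_nat x) (val j) - p j) +
     (emp (to_nat (upd x i y)) (val j) - emp (to_nat x) (val j)) by ring.
  apply: (le_trans (ler_normD _ _)); rewrite lerD2l emp_upd normrM ger0_norm //.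
  apply: ler_wpM2l => //.
  by case: (y == j); case: (x i == j); rewrite /= ?mulr1n ?mulr0n ?subrr ?subr0
    ?sub0r ?normrN ?normr0 ?normr1; lra.
rewrite big_split /= mulrDr lerD2l -mulr_sumr big_split /=.
have h1 : forall z : 'I_n, \sum_j (z == j)%:R = 1 :> R.
  move=> z; rewrite (bigD1 z) //= eqxx big1 ?addr0 //.
  by move=> j /negPf; rewrite eq_sym => ->.
by rewrite !h1; lra.
Qed.

Lemma gap_bounded_diff : bounded_diff (3 / (2 * m%:R)) gap.
Proof.
move=> x i y; have h1 := rad_upd x i y; have h2 := tv_fin_upd x i y.
have -> : 3 / (2 * m%:R) = 2^-1 * (m%:R)^-1 + (m%:R)^-1 :> R.
  by field; rewrite gt_eqF ?mR_gt0.
have h3 : 0 < (m%:R)^-1 :> R by rewrite invr_gt0 mR_gt0.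
by rewrite /gap; lra.
Qed.

(* The positive part, written so that its sum over a centred family is half
   the l1 norm. *)
Definition pos_part (a : R) := (`|a| + a) / 2.

Lemma pos_part_ge (a : R) : a <= pos_part a.
Proof. by rewrite /pos_part; have := ler_norm a; lra. Qed.

Lemma pos_part_ge0 (a : R) : 0 <= pos_part a.
Proof. by rewrite /pos_part; have := ler_norm (- a); rewrite normrN; lra. Qed.

Lemma pos_partD (a b : R) : pos_part (a + b) <= pos_part a + pos_part b.
Proof. by rewrite /pos_part; have := ler_normD a b; lra. Qed.

Lemma pos_partZ (c a : R) : 0 <= c -> pos_part (c * a) = c * pos_part a.
Proof. by move=> c0; rewrite /pos_part normrM ger0_norm //; field. Qed.

Lemma sum_pos_part (a : 'I_n -> R) :
  \sum_i a i = 0 -> \sum_i pos_part (a i) = 2^-1 * \sum_i `|a i|.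
Proof.
move=> h; rewrite /pos_part (eq_bigr (fun i => 2^-1 * `|a i| + 2^-1 * a i));
  last by move=> i _; field.
by rewrite big_split /= -!mulr_sumr h mulr0 addr0.
Qed.

Definition meanf (f : nat -> bool) : R := \sum_i p i * (f (val i) : nat)%:R.
Definition sgn_sum (s : signs) : R := \sum_t sgn R (s t).
Definition sym_dev (x x' : sample) (s : signs) : R :=
  \sum_i pos_part (\sum_t sgn R (s t) * ((x t == i)%:R - (x' t == i)%:R)).

Lemma meanf_01 f : 0 <= meanf f <= 1.
Proof.
apply/andP; split.
  by apply: sumr_ge0 => i _; apply: mulr_ge0 => //; case: (nat_of_bool_01 R (f (val i))).
rewrite -p_sum1; apply: ler_sum => i _; rewrite -[leRHS]mulr1; apply: ler_wpM2l => //.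
by case: (nat_of_bool_01 R (f (val i))).
Qed.

Lemma indicator_expand (f : nat -> bool) (z : 'I_n) :
  (f (val z) : nat)%:R = \sum_i (f (val i) : nat)%:R * (z == i)%:R :> R.
Proof.
rewrite (bigD1 z) //= eqxx mulr1 big1 ?addr0 //.
by move=> i; rewrite eq_sym => /negPf ->; rewrite mulr0.
Qed.

Lemma corr_centre (x : sample) (s : signs) (f : nat -> bool) :
  \sum_t sgn R (s t) * (f (to_nat x t) : nat)%:R =
  \sum_(x' : sample) wprod p x' *
     \sum_t sgn R (s t) * ((f (val (x t)) : nat)%:R - (f (val (x' t)) : nat)%:R)
  + meanf f * sgn_sum s.
Proof.
have e1 : forall t, \sum_(x' : sample) wprod p x' * (f (val (x' t)) : nat)%:R = meanf f.
  by move=> t; rewrite (marginal p_sum1 t (fun z => (f (val z) : nat)%:R)).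
under [X in _ = X + _]eq_bigr do rewrite mulr_sumr.
rewrite exchange_big /= /sgn_sum mulr_sumr -big_split /=; apply: eq_bigr => t _.
rewrite (eq_bigr (fun x' => sgn R (s t) * (f (val (x t)) : nat)%:R * wprod p x' -
            sgn R (s t) * (wprod p x' * (f (val (x' t)) : nat)%:R)));
  last by move=> x' _; ring.
by rewrite sumrB -!mulr_sumr e1 sum_wprod // /to_nat ffunE; ring.
Qed.

Lemma corr_sym_le (x x' : sample) (s : signs) (f : nat -> bool) :
  \sum_t sgn R (s t) * ((f (val (x t)) : nat)%:R - (f (val (x' t)) : nat)%:R)
  <= sym_dev x x' s.
Proof.
have -> : \sum_t sgn R (s t) * ((f (val (x t)) : nat)%:R - (f (val (x' t)) : nat)%:R) =
  \sum_i (f (val i) : nat)%:R * \sum_t sgn R (s t) * ((x t == i)%:R - (x' t == i)%:R).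
  under eq_bigr do rewrite (indicator_expand f (x _)) (indicator_expand f (x' _))
    -sumrB mulr_sumr.
  rewrite exchange_big /=; apply: eq_bigr => i _; rewrite mulr_sumr.
  by apply: eq_bigr => t _; ring.
apply: ler_sum => i _.
by case: (f (val i)); rewrite /= ?mul1r ?mul0r; [apply: pos_part_ge | apply: pos_part_ge0].
Qed.

Lemma rad_le_sym x :
  rad x <= (2 ^+ m)^-1 * \sum_(s : signs)
     (m%:R)^-1 * (\sum_(x' : sample) wprod p x' * sym_dev x x' s + `|sgn_sum s|).
Proof.
rewrite radE; apply: ler_wpM2l; first by rewrite invr_ge0 exprn_ge0.
apply: ler_sum => s _; apply: sup_img_ub => f.
rewrite /corr corr_centre; apply: ler_wpM2l; first by rewrite invr_ge0 ler0n.
apply: lerD.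
  apply: ler_sum => x' _; apply: ler_wpM2l; [exact: wprod_ge0 | exact: corr_sym_le].
have /andP[h0 h1] := meanf_01 f.
rewrite -[leRHS]mul1r; apply: (le_trans (ler_norm _)); rewrite normrM.
by apply: ler_wpM2r => //; rewrite ger0_norm.
Qed.

(* Exchanging x t and x' t at the coordinates where s t is true preserves
   p^m (x) p^m and turns the signs s into the all-true signs. *)
Definition swap_on (s : signs) (pr : sample * sample) :=
  ([ffun t => if s t then pr.1 t else pr.2 t], [ffun t => if s t then pr.2 t else pr.1 t]).

Lemma swap_on_inv s : involutive (swap_on s).
Proof.
move=> [x x']; rewrite /swap_on /=; congr pair; apply/ffunP => t; rewrite !ffunE;
  by case: (s t).
Qed.

Definition all_true : signs := [ffun => true].

Lemma mean_sym_dev_swap s :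
  \sum_(x : sample) \sum_(x' : sample) wprod p x * wprod p x' * sym_dev x x' s =
  \sum_(x : sample) \sum_(x' : sample) wprod p x * wprod p x' * sym_dev x x' all_true.
Proof.
rewrite !pair_big /= [RHS](reindex_inj (inv_inj (swap_on_inv s))) /=.
apply: eq_bigr => -[x x'] _ /=; congr (_ * _).
  rewrite /wprod -!big_split /=; apply: eq_bigr => t _; rewrite !ffunE.
  by case: (s t) => //; rewrite mulrC.
rewrite /sym_dev; apply: eq_bigr => i _; congr pos_part; apply: eq_bigr => t _.
by rewrite !ffunE; case: (s t); rewrite /sgn; ring.
Qed.

Lemma sym_dev_all_true x x' : sym_dev x x' all_true <= m%:R * (tv_fin x + tv_fin x').
Proof.
have hm : 0 <= m%:R :> R by rewrite ler0n.
have e : forall i : 'I_n, \sum_t sgn R (all_true t) * ((x t == i)%:R - (x' t == i)%:R) =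
   m%:R * ((emp (to_nat x) (val i) - p i) + (p i - emp (to_nat x') (val i))).
  move=> i; rewrite !emp_fin.
  rewrite (eq_bigr (fun t => (x t == i)%:R - (x' t == i)%:R));
    last by move=> t _; rewrite /all_true ffunE /sgn mul1r.
  by rewrite sumrB; field; rewrite gt_eqF ?mR_gt0.
rewrite /sym_dev /tv_fin; under eq_bigr do rewrite e pos_partZ //.
rewrite -mulr_sumr; apply: ler_wpM2l => //.
apply: (le_trans (y := \sum_i (pos_part (emp (to_nat x) (val i) - p i) +
                              pos_part (p i - emp (to_nat x') (val i))))).
  by apply: ler_sum => i _; apply: pos_partD.
rewrite big_split /= !sum_pos_part ?sumrB ?p_sum1 ?sum_emp ?subrr //.
by under [X in _ + _ * X <= _]eq_bigr do rewrite distrC.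
Qed.

Lemma mean_sym_dev_le :
  \sum_(x : sample) \sum_(x' : sample) wprod p x * wprod p x' * sym_dev x x' all_true
  <= 2 * m%:R * expect p tv_fin.
Proof.
apply: (le_trans (y := \sum_(x : sample) \sum_(x' : sample)
     wprod p x * wprod p x' * (m%:R * (tv_fin x + tv_fin x')))).
  apply: ler_sum => x _; apply: ler_sum => x' _; apply: ler_wpM2l;
    last exact: sym_dev_all_true.
  by apply: mulr_ge0; apply: wprod_ge0.
rewrite le_eqVlt; apply/orP; left; apply/eqP.
rewrite /expect.
have -> : \sum_(x : sample) \sum_(x' : sample)
     wprod p x * wprod p x' * (m%:R * (tv_fin x + tv_fin x')) =
   m%:R * (\sum_(x : sample) wprod p x * tv_fin x * \sum_(x' : sample) wprod p x' +
           \sum_(x : sample) wprod p x * \sum_(x' : sample) wprod p x' * tv_fin x').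
  rewrite -big_split /= mulr_sumr; apply: eq_bigr => x _.
  by rewrite !mulr_sumr -big_split /= mulr_sumr; apply: eq_bigr => x' _; ring.
rewrite sum_wprod //; under eq_bigr do rewrite mulr1.
by rewrite -mulr_suml sum_wprod // mul1r; ring.
Qed.

Lemma mean_rad_le :
  expect p rad <=
  2 * expect p tv_fin + (m%:R)^-1 * ((2 ^+ m)^-1 * \sum_(s : signs) `|sgn_sum s|).
Proof.
set c2 := (2 ^+ m)^-1 : R; set mi := (m%:R)^-1 : R.
set D := \sum_(x : sample) \sum_(x' : sample)
  wprod p x * wprod p x' * sym_dev x x' all_true.
have hmi : mi * m%:R = 1 by rewrite mulVf // gt_eqF ?mR_gt0.
have hc2 : c2 * 2 ^+ m = 1 by rewrite mulVf // expf_neq0.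
have mean_bound : expect p rad <= \sum_(s : signs) c2 * mi * (D + `|sgn_sum s|).
  apply: (le_trans (y := \sum_(x : sample) wprod p x * (c2 * \sum_(s : signs)
     mi * (\sum_(x' : sample) wprod p x' * sym_dev x x' s + `|sgn_sum s|)))).
    by apply: ler_sum => x _; apply: ler_wpM2l; [apply: wprod_ge0 | apply: rad_le_sym].
  rewrite le_eqVlt; apply/orP; left; apply/eqP.
  rewrite (eq_bigr (fun x => \sum_(s : signs) c2 * mi *
      (\sum_(x' : sample) wprod p x * wprod p x' * sym_dev x x' s +
       wprod p x * `|sgn_sum s|))); last first.
    move=> x _; rewrite !mulr_sumr; apply: eq_bigr => s _.
    rewrite [in RHS](eq_bigr (fun x' => wprod p x * (wprod p x' * sym_dev x x' s)));
      last by move=> x' _; rewrite mulrA.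
    by rewrite -mulr_sumr; ring.
  rewrite exchange_big /=; apply: eq_bigr => s _.
  by rewrite -mulr_sumr big_split /= -mulr_suml sum_wprod // mul1r mean_sym_dev_swap.
apply: (le_trans mean_bound).
rewrite -mulr_sumr big_split /= sumr_const card_signs.
rewrite -[D *+ _]mulr_natl natrX -/c2.
rewrite mulrDr (_ : c2 * mi * (2 ^+ m * D) = mi * D * (c2 * 2 ^+ m)); last by ring.
rewrite hc2 mulr1 (mulrC c2 mi) -mulrA lerD2r.
apply: (le_trans (ler_wpM2l (ltW _) mean_sym_dev_le)); first by rewrite invr_gt0 mR_gt0.
by rewrite mulrA mulrCA hmi mulr1.
Qed.

Definition flip_sign (t : 'I_m) (s : signs) : signs :=
  [ffun u => if u == t then ~~ s u else s u].

Lemma flip_sign_inv t : involutive (flip_sign t).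
Proof. by move=> s; apply/ffunP => u; rewrite !ffunE; case: (u == t); rewrite ?negbK. Qed.

Lemma sum_sgn_pair (t t' : 'I_m) :
  \sum_(s : signs) sgn R (s t) * sgn R (s t') = if t == t' then (2 ^ m)%:R else 0.
Proof.
case: eqP => [<- | /eqP ntt].
  rewrite (eq_bigr (fun _ => 1)); last by move=> s _; case: (s t); rewrite /sgn; ring.
  by rewrite sumr_const card_signs.
set S := \sum_(s : signs) _.
have S_opp : S = - S.
  rewrite {1}/S (reindex_inj (inv_inj (flip_sign_inv t))) /S -sumrN.
  apply: eq_bigr => s _; rewrite /flip_sign !ffunE eqxx eq_sym (negbTE ntt).
  by case: (s t); rewrite /sgn /=; ring.
by lra.
Qed.

Lemma sum_sgn_sum_sq : \sum_(s : signs) sgn_sum s ^+ 2 = m%:R * (2 ^ m)%:R.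
Proof.
rewrite (eq_bigr (fun s : signs => \sum_t \sum_t' sgn R (s t) * sgn R (s t'))); last first.
  by move=> s _; rewrite expr2 /sgn_sum mulr_suml; apply: eq_bigr => t _; rewrite mulr_sumr.
rewrite exchange_big /= (eq_bigr (fun _ => (2 ^ m)%:R)); last first.
  move=> t _; rewrite exchange_big /=; under eq_bigr do rewrite sum_sgn_pair.
  by rewrite -big_mkcond /= (big_pred1 t) // => i; rewrite eq_sym.
by rewrite sumr_const card_ord mulr_natl.
Qed.

(* Khintchine-type bound: the average of |sum of m signs| is at most sqrt m,
   from the second moment and 2 a b <= a^2 + b^2. *)
Lemma sum_abs_sgn_sum : \sum_(s : signs) `|sgn_sum s| <= (2 ^ m)%:R * Num.sqrt m%:R.
Proof.
have hs : 0 < Num.sqrt (m%:R : R) by rewrite sqrtr_gt0 mR_gt0.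
have hss : Num.sqrt (m%:R : R) ^+ 2 = m%:R by rewrite sqr_sqrtr // ler0n.
rewrite -(ler_pM2r (mulr_gt0 (ltr0n R 2) hs)) mulr_suml.
apply: (le_trans (y := \sum_(s : signs) (sgn_sum s ^+ 2 + m%:R))).
  apply: ler_sum => s _.
  have h1 : 0 <= (`|sgn_sum s| - Num.sqrt m%:R) ^+ 2 by apply: sqr_ge0.
  have h2 : `|sgn_sum s| ^+ 2 = sgn_sum s ^+ 2 by rewrite real_normK // num_real.
  nra.
rewrite big_split /= sum_sgn_sum_sq sumr_const card_signs -[(m%:R : R) *+ _]mulr_natl.
have h2m : 0 <= (2 ^ m)%:R :> R by rewrite ler0n.
set N := ((2 ^ m)%:R : R); set q := Num.sqrt (m%:R : R) in hss *.
have -> : N * q * (2 * q) = 2 * N * q ^+ 2 by ring.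
by rewrite hss; lra.
Qed.

Lemma mean_gap_le : expect p gap <= (2 * Num.sqrt m%:R)^-1.
Proof.
have hs : 0 < Num.sqrt (m%:R : R) by rewrite sqrtr_gt0 mR_gt0.
have hss : Num.sqrt (m%:R : R) ^+ 2 = m%:R by rewrite sqr_sqrtr // ler0n.
have -> : expect p gap = 2^-1 * expect p rad - expect p tv_fin.
  by rewrite /expect mulr_sumr -sumrB; apply: eq_bigr => x _; rewrite /gap; ring.
have h1 := mean_rad_le.
set S := \sum_(s : signs) `|sgn_sum s| in h1.
have hc : (2 ^+ m)^-1 * S <= Num.sqrt m%:R.
  by rewrite ler_pdivrMl ?exprn_gt0 // -natrX; apply: sum_abs_sgn_sum.
have hm : (m%:R)^-1 * ((2 ^+ m)^-1 * S) <= (Num.sqrt m%:R)^-1.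
  rewrite ler_pdivrMl ?mR_gt0 //; apply: (le_trans hc).
  by rewrite ler_pdivlMr // -expr2 hss.
by rewrite invfM; lra.
Qed.

End EmpiricalGap.

Section TailExponent.
Variable R : realType.

Lemma ln_ratio_ge (delta : R) : 0 < delta < 1 -> 1/2 + (- ln delta) <= ln (2 / delta).
Proof.
move=> /andP[d0 d1]; have l2 := @ln2_ge R.
by rewrite ln_div ?posrE //; lra.
Qed.

(* The deviation level is never tiny: sqrt (ln (2/delta)) >= sqrt (1/2). *)
Lemma sqrt_log_ge (delta : R) : 0 < delta < 1 -> 7/10 <= Num.sqrt (ln (2 / delta)).
Proof.
move=> hd; have /andP[d0 d1] := hd.
have lnd : ln delta < 0 by rewrite ln_lt0 // d0 d1.
have hL := ln_ratio_ge hd.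
have u0 := sqrtr_ge0 (ln (2 / delta)).
have uu : Num.sqrt (ln (2 / delta)) ^+ 2 = ln (2 / delta) by rewrite sqr_sqrtr //; lra.
by nra.
Qed.

Lemma tail_exponent (delta w : R) : 0 < delta < 1 -> 0 <= w <= 1/24 ->
  expR (- (10 * (3 * Num.sqrt (ln (2 / delta)) - w - 1/2) ^+ 2 / 81)) <= 10/11 * delta.
Proof.
move=> hd /andP[w0 w1]; have /andP[d0 d1] := hd.
have lnd : ln delta < 0 by rewrite ln_lt0 // d0 d1.
have hL := ln_ratio_ge hd.
have u7 := sqrt_log_ge hd.
set u := Num.sqrt (ln (2 / delta)) in u7 *.
have uu : u ^+ 2 = ln (2 / delta) by rewrite sqr_sqrtr //; lra.
have hsq : (3 * u - 13/24) ^+ 2 <= (3 * u - w - 1/2) ^+ 2.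
  by rewrite !expr2; apply: ler_pM; lra.
have key : - (10 * (3 * u - w - 1/2) ^+ 2 / 81) <= ln delta - 1/10.
  have e : 10 * (3 * u - 13/24) ^+ 2 - 81 * (u ^+ 2 - 1/2 + 1/10) =
    9 * (u - 65/36) ^+ 2 + 959/160 by field.
  by have := sqr_ge0 (u - 65/36); lra.
apply: (le_trans (y := expR (ln delta - 1/10))); first by rewrite ler_expR.
rewrite expRD lnK ?posrE // mulrC ler_wpM2r ?(ltW d0) // expRN.
have h11 := expR_ge1Dx (1/10 : R).
by rewrite -[X in _ <= X]invrK lef_pV2 ?posrE ?expR_gt0 //; lra.
Qed.

Lemma chernoff_choice (k v eps : R) : 0 < k -> v ^+ 2 = k -> 0 <= eps <= 1/2 ->
  let s := 20 * k * eps / 81 in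
  [/\ 0 <= s, s * (3 / (2 * k)) <= 1/5 &
      - (s * eps) + 9/10 * s ^+ 2 * (3 / (2 * k)) ^+ 2 * k = - (10 * (v * eps) ^+ 2 / 81)].
Proof.
move=> k0 vv /andP[eps0 eps1] s; split; first by rewrite /s !mulr_ge0 // ltW.
  by rewrite (_ : s * _ = 10 * eps / 27); [lra | rewrite /s; field; rewrite gt_eqF].
by rewrite [(v * eps) ^+ 2]exprMn vv /s; field; rewrite gt_eqF.
Qed.

End TailExponent.

Section GapTail.
Variable R : realType.
Variables (n m : nat).
Hypothesis m_gt0 : (0 < m)%N.
Variable p : 'I_n -> R.
Hypothesis p_ge0 : forall i, 0 <= p i.
Hypothesis p_sum1 : \sum_i p i = 1.

Lemma gap_tail (delta tau : R) :
  0 < delta < 1 -> 0 <= tau -> Num.sqrt (m%:R) * tau <= 1/24 ->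
  \sum_(x : {ffun 'I_m -> 'I_n} | ~~ (gap p x <= 3 * Num.sqrt (ln (2 / delta) / m%:R) - tau))
     wprod p x <= 10/11 * delta.
Proof.
move=> hd t0 hw; have /andP[d0 d1] := hd.
set c := 3 * Num.sqrt (ln (2 / delta) / m%:R).
(* Above the level 1/2 the event is empty, as gap <= 1/2. *)
case: (lerP (2^-1) (c - tau)) => hc.
  rewrite big_pred0; first by apply: mulr_ge0 => //; lra.
  by move=> x; apply/negbTE; rewrite negbK; apply: le_trans (gap_le_half m_gt0 p x) hc.
have mR : 0 < m%:R :> R by rewrite ltr0n.
set v := Num.sqrt (m%:R : R) in hw *.
have v0 : 0 < v by rewrite sqrtr_gt0.
have vv : v ^+ 2 = m%:R by rewrite sqr_sqrtr // ltW.
have L0 : 0 <= ln (2 / delta) by rewrite ln_ge0 // ler_pdivlMr // mul1r; lra.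
have cv : c * v = 3 * Num.sqrt (ln (2 / delta)).
  by rewrite /c -mulrA -sqrtrM ?divr_ge0 ?ler0n // mulfVK // gt_eqF.
(* The level c - tau lies eps above the bound (2 v)^-1 on the mean. *)
set eps := c - tau - (2 * v)^-1.
have ev : v * eps = 3 * Num.sqrt (ln (2 / delta)) - v * tau - 1/2.
  by rewrite /eps !mulrBr [v * c]mulrC cv; field; rewrite gt_eqF.
have hw0 : 0 <= v * tau by apply: mulr_ge0 => //; apply: ltW.
have eps0 : 0 <= eps by rewrite -(pmulr_rge0 _ v0) ev; have := sqrt_log_ge hd; lra.
have eps01 : 0 <= eps <= 1/2.
  have : 0 <= (2 * v)^-1 by rewrite invr_ge0 mulr_ge0 // ltW.
  by rewrite eps0 /eps; lra.
have hmean : expect p (gap (m := m) p) + eps <= c - tau.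
  by have := mean_gap_le m_gt0 p_ge0 p_sum1; rewrite -/v /eps; lra.
have c00 : 0 <= 3 / (2 * m%:R) :> R by rewrite divr_ge0 // mulr_ge0 // ltW.
have [s0 sc ex] := chernoff_choice mR vv eps01.
apply: le_trans (mcdiarmid_tail p_ge0 p_sum1 s0 c00 sc (gap_bounded_diff m_gt0 p) hmean) _.
by rewrite -expRD ex ev; apply: tail_exponent => //; lra.
Qed.

End GapTail.

Section CountableSums.
Variable R : realType.

Lemma esum_ge_fin (T : choiceType) (F : finType) (e : F -> T) (I : set T)
    (a : T -> R) (A : pred F) :
  injective e -> (forall y, A y -> I (e y)) ->
  ((\sum_(y | A y) a (e y))%:E <= \esum_(i in I) (a i)%:E)%E.
Proof.
move=> einj hI; apply: esum_ge.
exists [set` [seq e y | y <- enum A]].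
  split; first exact: finite_seq.
  by move=> t /= /mapP [y]; rewrite mem_enum => /hI hy ->.
rewrite -fsbig_seq; last by rewrite map_inj_uniq // enum_uniq.
by rewrite big_map big_enum sumEFin.
Qed.

Definition head_mass (mu : nat -> R) (N : nat) : R := \sum_(i < N) mu i.

Lemma head_mass_close (mu : nat -> R) (eta : R) :
  (forall i, 0 <= mu i) -> (\esum_(i in [set: nat]) (mu i)%:E = 1)%E -> 0 < eta ->
  exists N, 1 - eta <= head_mass mu N <= 1.
Proof.
move=> mu0 h1 heta.
have : ((1 - eta)%:E < \esum_(i in [set: nat]) (mu i)%:E)%E by rewrite h1 lte_fin; lra.
move=> /ereal_sup_gt [_ [X [finX _] <-]] hX.
pose F := fset_set X.
pose N := (\max_(k <- F) k)%N.+1.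
exists N; apply/andP; split.
  rewrite -lee_fin; apply: (le_trans (ltW hX)); rewrite fsbig_finite //.
  apply: (le_trans (lee_sum_fset_nat F N xpredT _ _)) => //.
  - by move=> i _; rewrite lee_fin.
  - move=> k /= kF; rewrite /N big_seq_fsetE /=.
    by rewrite -[k]/(val [`kF]%fset) ltnS leq_bigmax.
  by rewrite big_mkord sumEFin.
rewrite -lee_fin -h1.
exact: (@esum_ge_fin _ _ (fun i : 'I_N => val i) [set: nat] mu xpredT val_inj).
Qed.

Lemma good_truncation (mu : nat -> R) m (delta : R) :
  (0 < m)%N -> 0 < delta < 1 -> (forall i, 0 <= mu i) ->
  (\esum_(i in [set: nat]) (mu i)%:E = 1)%E ->
  exists N, [/\ 0 < head_mass mu N, head_mass mu N <= 1 &
              m%:R * (1 - head_mass mu N) <= delta / 12].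
Proof.
move=> m_gt0 /andP[d0 d1] mu_ge0 mu_sum1.
have mR : 0 < m%:R :> R by rewrite ltr0n.
have m1 : 1 <= m%:R :> R by rewrite ler1n.
have eta0 : 0 < delta / (12 * m%:R) by rewrite divr_gt0 // mulr_gt0.
have [N /andP[M_ge M_le1]] := head_mass_close mu_ge0 mu_sum1 eta0.
have mM : m%:R * (1 - head_mass mu N) <= delta / 12.
  have -> : delta / 12 = m%:R * (delta / (12 * m%:R)) by field; rewrite gt_eqF.
  by apply: ler_wpM2l; [apply: ltW | lra].
by exists N; split => //; nra.
Qed.

End CountableSums.

Section TruncatedLaw.
Variable R : realType.
Variable mu : nat -> R.
Hypothesis mu_ge0 : forall i, 0 <= mu i.
Variable N : nat.
Hypothesis mass_gt0 : 0 < head_mass mu N.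
Hypothesis mass_le1 : head_mass mu N <= 1.

Local Notation M := (head_mass mu N).

Definition trunc_law (i : 'I_N) : R := mu (val i) / M.

Lemma trunc_law_ge0 i : 0 <= trunc_law i.
Proof. by rewrite divr_ge0 // ltW. Qed.

Lemma trunc_law_sum1 : \sum_i trunc_law i = 1.
Proof. by rewrite -mulr_suml mulfV // gt_eqF. Qed.

Lemma tv_dist_trunc m (x : {ffun 'I_m -> 'I_N}) :
  ((tv_fin trunc_law x - (1 - M) / 2)%:E <= tv_dist (emp (to_nat x)) mu)%E.
Proof.
have h1 := @esum_ge_fin R _ _ (fun i : 'I_N => val i) [set: nat]
   (fun i => `|emp (to_nat x) i - mu i|) xpredT val_inj (fun _ _ => I).
apply: le_trans (lee_wpmul2l _ h1); last by rewrite lee_fin.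
rewrite -EFinM lee_fin /tv_fin.
have trunc_ge i : mu (val i) <= trunc_law i by rewrite /trunc_law ler_pdivlMr // ler_piMr.
have hs : \sum_(i : 'I_N) (trunc_law i - mu (val i)) = 1 - M by rewrite sumrB trunc_law_sum1.
apply: (le_trans (y := 2^-1 * \sum_(i : 'I_N)
     (`|emp (to_nat x) (val i) - mu (val i)| + (trunc_law i - mu (val i))) - (1 - M) / 2)).
  rewrite lerD2r; apply: ler_wpM2l => //; apply: ler_sum => i _.
  have -> : emp (to_nat x) (val i) - trunc_law i =
    (emp (to_nat x) (val i) - mu (val i)) + (mu (val i) - trunc_law i) by ring.
  apply: (le_trans (ler_normD _ _)); rewrite lerD2l ler0_norm ?opprB //.
  by have := trunc_ge i; lra.
by rewrite big_split /= hs; lra.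
Qed.

Lemma small_gap_good m c (x : {ffun 'I_m -> 'I_N}) :
  gap trunc_law x <= c - (1 - M) / 2 ->
  ((2^-1 * emp_rademacher (to_nat x) - c)%:E <= tv_dist (emp (to_nat x)) mu)%E.
Proof.
move=> hx; apply: le_trans (tv_dist_trunc x).
by rewrite lee_fin; move: hx; rewrite /gap /rad; lra.
Qed.

Lemma mass_trunc m (P : pred {ffun 'I_m -> 'I_N}) :
  \sum_(x | P x) \prod_(t < m) mu (to_nat x t) =
  M ^+ m * (1 - \sum_(x | ~~ P x) wprod trunc_law x).
Proof.
rewrite -[X in _ * (X - _)](sum_wprod trunc_law_sum1 m) [X in _ * (X - _)](bigID P) /=.
rewrite addrK mulr_sumr.
have -> : M ^+ m = \prod_(t < m) M by rewrite prodr_const card_ord.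
apply: eq_bigr => x _; rewrite /wprod -big_split /=.
by apply: eq_bigr => t _; rewrite /to_nat ffunE /trunc_law mulrC mulfVK // gt_eqF.
Qed.

End TruncatedLaw.
Arguments trunc_law {R} mu N.

Theorem lemma3 (R : realType) (m : nat) (delta : R) (mu : nat -> R) :
  (0 < m)%N -> 0 < delta < 1 -> is_distrN mu ->
  (prob_prod mu
     [set x : {ffun 'I_m -> nat} |
        (tv_dist (emp x) mu >=
         ((2 : R)^-1 * emp_rademacher x
          - 3 * Num.sqrt (ln (2 / delta) / m%:R))%:E)%E]
   >= (1 - delta)%:E)%E.
Proof.
move=> m_gt0 hd [mu_ge0 _ mu_sum1]; have /andP[d0 d1] := hd.
have [N [M_gt0 M_le1 mM]] := good_truncation m_gt0 hd mu_ge0 mu_sum1.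
set M := head_mass mu N in M_gt0 M_le1 mM.
set tau := (1 - M) / 2; set c := 3 * Num.sqrt (ln (2 / delta) / m%:R).
have tau0 : 0 <= tau by rewrite /tau; lra.
have small_tau : Num.sqrt m%:R * tau <= 1/24.
  apply: (le_trans (ler_wpM2r tau0 (sqrt_le_self _))); first by rewrite ler1n.
  by rewrite /tau; lra.
(* Restrict the mu^m-mass to the good samples of the truncated law. *)
set Ev := [set x : {ffun 'I_m -> nat} | _].
apply: (le_trans _ (esum_ge_fin (I := Ev) (fun x => \prod_(t < m) mu (x t))
  (@to_nat_inj N m) (small_gap_good (c := c) mu_ge0 M_gt0 M_le1))).
rewrite lee_fin mass_trunc // -/M.
(* M^m >= 1 - m (1 - M) >= 1 - delta/12, and the tail is at most 10/11 delta. *)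
apply: loss_budget => //.
  by apply: le_trans (bernoulli_ineq m (ltW M_gt0)); lra.
have tail := gap_tail m_gt0 (trunc_law_ge0 mu_ge0 M_gt0) (trunc_law_sum1 M_gt0) hd tau0 small_tau.
by rewrite -/c in tail.
Qed.
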